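(* Let $Y$ be a Hilbert space and $r=2$. Let $F$ be Fréchet differentiable and satisfy Assumption (A4) with constants $\rho$ and $K$, and assume $\mathcal M_\rho$ is contained in the interior of $\mathcal D(F)$. Let $y^\delta\in Y$, $\alpha>0$, let $x_\alpha^\delta$ be a minimizer of $\|F(x)-y^\delta\|^2+\alpha\mathcal R(x)$ over $\mathcal D(F)$ and $x_\alpha$ a minimizer of $\|F(x)-y\|^2+\alpha\mathcal R(x)$ over $\mathcal D(F)$, and assume $x^\delta_\alpha,x_\alpha\in\mathcal M_\rho$. Then $\xi_\alpha:=\frac{2}{\alpha}F'(x_\alpha)^*(y-F(x_\alpha))\in\partial\mathcal R(x_\alpha)$ and $$\|F(x^\delta_\alpha)-y^\delta+y-F(x_\alpha)\|^2+2\alpha\Big(1-\frac{4K^2\|F(x_\alpha)-y\|^2}{\alpha}\Big)D_{\xi_\alpha}\mathcal R(x^\delta_\alpha,x_\alpha)\le3\|y^\delta-y\|^2.$$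
   Context: Setting: $X$ is a reflexive Banach space, $Y$ a Hilbert space (identified with its dual, so $F'(x)^*:Y\to X^*$), $F:\mathcal D(F)\subset X\to Y$ weakly closed, $\mathcal R:X\to[0,\infty]$ proper, lower semicontinuous, convex; $F(x)=y$ has a solution in $\mathcal D(\mathcal R)$ and $x^\dagger$ is an $\mathcal R$-minimizing solution (a solution minimizing $\mathcal R$ among all solutions of $F(x)=y$). $\partial\mathcal R$ is the subdifferential and $D_\xi\mathcal R(\bar x,x)=\mathcal R(\bar x)-\mathcal R(x)-\langle\xi,\bar x-x\rangle$ for $\xi\in\partial\mathcal R(x)$. $\mathcal M_\rho:=\{x\in\mathcal D(F):\mathcal R(x)<\rho\}$. Assumption (A4): $F$ is Fréchet differentiable with derivative $F'$, and there exist $\rho>\mathcal R(x^\dagger)$ and $K\ge0$ such that $\|F(\bar x)-F(x)-F'(x)(\bar x-x)\|\le K[D_\xi\mathcal R(\bar x,x)]^{1/2}\|F(\bar x)-F(x)\|$ for all $\bar x,x\in\mathcal M_\rho$ and all $\xi\in\partial\mathcal R(x)$. *)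

From Stdlib Require Import Reals Lra.
Open Scope R_scope.

Record NormedSpace := mkNormedSpace {
  ns_car :> Type;
  ns_zero : ns_car;
  ns_add : ns_car -> ns_car -> ns_car;
  ns_opp : ns_car -> ns_car;
  ns_scal : R -> ns_car -> ns_car;
  ns_norm : ns_car -> R;
  ns_add_assoc : forall u v w, ns_add u (ns_add v w) = ns_add (ns_add u v) w;
  ns_add_comm : forall u v, ns_add u v = ns_add v u;
  ns_add_zero : forall u, ns_add u ns_zero = u;
  ns_add_opp : forall u, ns_add u (ns_opp u) = ns_zero;
  ns_scal_assoc : forall a b u, ns_scal a (ns_scal b u) = ns_scal (a * b) u;
  ns_scal_one : forall u, ns_scal 1 u = u;
  ns_scal_distr_l : forall a u v, ns_scal a (ns_add u v) = ns_add (ns_scal a u) (ns_scal a v);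
  ns_scal_distr_r : forall a b u, ns_scal (a + b) u = ns_add (ns_scal a u) (ns_scal b u);
  ns_norm_eq0 : forall u, ns_norm u = 0 -> u = ns_zero;
  ns_norm_triangle : forall u v, ns_norm (ns_add u v) <= ns_norm u + ns_norm v;
  ns_norm_scal : forall a u, ns_norm (ns_scal a u) = Rabs a * ns_norm u
}.

Definition ns_sub (X : NormedSpace) (u v : X) : X := ns_add X u (ns_opp X v).

Record HilbertSpace := mkHilbertSpace {
  hs_car :> Type;
  hs_zero : hs_car;
  hs_add : hs_car -> hs_car -> hs_car;
  hs_opp : hs_car -> hs_car;
  hs_scal : R -> hs_car -> hs_car;
  hs_inner : hs_car -> hs_car -> R;
  hs_add_assoc : forall u v w, hs_add u (hs_add v w) = hs_add (hs_add u v) w;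
  hs_add_comm : forall u v, hs_add u v = hs_add v u;
  hs_add_zero : forall u, hs_add u hs_zero = u;
  hs_add_opp : forall u, hs_add u (hs_opp u) = hs_zero;
  hs_scal_assoc : forall a b u, hs_scal a (hs_scal b u) = hs_scal (a * b) u;
  hs_scal_one : forall u, hs_scal 1 u = u;
  hs_scal_distr_l : forall a u v, hs_scal a (hs_add u v) = hs_add (hs_scal a u) (hs_scal a v);
  hs_scal_distr_r : forall a b u, hs_scal (a + b) u = hs_add (hs_scal a u) (hs_scal b u);
  hs_inner_sym : forall u v, hs_inner u v = hs_inner v u;
  hs_inner_add_l : forall u v w, hs_inner (hs_add u v) w = hs_inner u w + hs_inner v w;
  hs_inner_scal_l : forall a u v, hs_inner (hs_scal a u) v = a * hs_inner u v;
  hs_inner_pos : forall u, 0 <= hs_inner u u;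
  hs_inner_eq0 : forall u, hs_inner u u = 0 -> u = hs_zero
}.

Definition hs_sub (Y : HilbertSpace) (u v : Y) : Y := hs_add Y u (hs_opp Y v).
Definition hs_norm (Y : HilbertSpace) (u : Y) : R := sqrt (hs_inner Y u u).

Definition ns_complete (X : NormedSpace) : Prop :=
  forall u : nat -> X,
    (forall eps, eps > 0 -> exists N, forall m n, (m >= N)%nat -> (n >= N)%nat ->
        ns_norm X (ns_sub X (u m) (u n)) < eps) ->
    exists x : X, forall eps, eps > 0 -> exists N, forall n, (n >= N)%nat ->
        ns_norm X (ns_sub X (u n) x) < eps.

Definition hs_complete (Y : HilbertSpace) : Prop :=
  forall u : nat -> Y,
    (forall eps, eps > 0 -> exists N, forall m n, (m >= N)%nat -> (n >= N)%nat ->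
        hs_norm Y (hs_sub Y (u m) (u n)) < eps) ->
    exists x : Y, forall eps, eps > 0 -> exists N, forall n, (n >= N)%nat ->
        hs_norm Y (hs_sub Y (u n) x) < eps.

Definition is_dual (X : NormedSpace) (f : X -> R) : Prop :=
  (forall u v, f (ns_add X u v) = f u + f v) /\
  (forall a u, f (ns_scal X a u) = a * f u) /\
  (exists M, forall u, Rabs (f u) <= M * ns_norm X u).

Definition reflexive (X : NormedSpace) : Prop :=
  forall Phi : (X -> R) -> R,
    (forall f g, is_dual X f -> is_dual X g -> Phi (fun u => f u + g u) = Phi f + Phi g) ->
    (forall a f, is_dual X f -> Phi (fun u => a * f u) = a * Phi f) ->
    (exists C, forall f M, is_dual X f -> 0 <= M ->
         (forall u, Rabs (f u) <= M * ns_norm X u) -> Rabs (Phi f) <= C * M) ->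
    exists x : X, forall f, is_dual X f -> Phi f = f x.

Definition is_bounded_linear (X : NormedSpace) (Y : HilbertSpace) (A : X -> Y) : Prop :=
  (forall u v, A (ns_add X u v) = hs_add Y (A u) (A v)) /\
  (forall a u, A (ns_scal X a u) = hs_scal Y a (A u)) /\
  (exists M, forall u, hs_norm Y (A u) <= M * ns_norm X u).

(* Hilbert-space adjoint (Y identified with its dual): <A^T w, h> = (w, A h) *)
Definition adjoint (X : NormedSpace) (Y : HilbertSpace) (A : X -> Y) (w : Y) : X -> R :=
  fun h => hs_inner Y w (A h).

Definition frechet_derivative (X : NormedSpace) (Y : HilbertSpace)
    (DF : X -> Prop) (F : X -> Y) (F' : X -> X -> Y) : Prop :=
  forall x, DF x ->
    is_bounded_linear X Y (F' x) /\
    forall eps, eps > 0 -> exists del, del > 0 /\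
      forall h, DF (ns_add X x h) -> ns_norm X h < del ->
        hs_norm Y (hs_sub Y (hs_sub Y (F (ns_add X x h)) (F x)) (F' x h))
          <= eps * ns_norm X h.

Definition weak_cv_X (X : NormedSpace) (u : nat -> X) (x : X) : Prop :=
  forall f, is_dual X f -> Un_cv (fun n => f (u n)) (f x).
Definition weak_cv_Y (Y : HilbertSpace) (v : nat -> Y) (w : Y) : Prop :=
  forall z, Un_cv (fun n => hs_inner Y (v n) z) (hs_inner Y w z).

Definition weakly_closed (X : NormedSpace) (Y : HilbertSpace)
    (DF : X -> Prop) (F : X -> Y) : Prop :=
  forall (u : nat -> X) (x : X) (w : Y),
    (forall n, DF (u n)) -> weak_cv_X X u x -> weak_cv_Y Y (fun n => F (u n)) w ->
    DF x /\ F x = w.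

Inductive ereal := EFin (r : R) | EInf.

Definition ereal_le (a b : ereal) : Prop :=
  match a, b with
  | _, EInf => True
  | EInf, EFin _ => False
  | EFin x, EFin y => x <= y
  end.

(* finite part (only used where the value is known to be finite) *)
Definition fin (a : ereal) : R := match a with EFin r => r | EInf => 0 end.

Definition proper_fun (X : NormedSpace) (Rf : X -> ereal) : Prop :=
  exists x r, Rf x = EFin r.

Definition nonneg_fun (X : NormedSpace) (Rf : X -> ereal) : Prop :=
  forall x r, Rf x = EFin r -> 0 <= r.

Definition convex_fun (X : NormedSpace) (Rf : X -> ereal) : Prop :=
  forall x z rx rz t, Rf x = EFin rx -> Rf z = EFin rz -> 0 <= t <= 1 ->
    ereal_le (Rf (ns_add X (ns_scal X t x) (ns_scal X (1 - t) z)))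
             (EFin (t * rx + (1 - t) * rz)).

(* lower semicontinuity (norm topology) = closed sublevel sets *)
Definition lsc_fun (X : NormedSpace) (Rf : X -> ereal) : Prop :=
  forall (u : nat -> X) (x : X) (c : R),
    (forall eps, eps > 0 -> exists N, forall n, (n >= N)%nat ->
        ns_norm X (ns_sub X (u n) x) < eps) ->
    (forall n, ereal_le (Rf (u n)) (EFin c)) ->
    ereal_le (Rf x) (EFin c).

Definition subdiff (X : NormedSpace) (Rf : X -> ereal) (x : X) (xi : X -> R) : Prop :=
  is_dual X xi /\
  exists rx, Rf x = EFin rx /\
    forall z, ereal_le (EFin (rx + xi (ns_sub X z x))) (Rf z).

(* Bregman distance D_xi R(xb, x) (for R(xb), R(x) finite) *)
Definition bregman (X : NormedSpace) (Rf : X -> ereal) (xi : X -> R) (xb x : X) : R :=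
  fin (Rf xb) - fin (Rf x) - xi (ns_sub X xb x).

Definition M_rho (X : NormedSpace) (DF : X -> Prop) (Rf : X -> ereal) (rho : R) (x : X) : Prop :=
  DF x /\ exists r, Rf x = EFin r /\ r < rho.

Definition R_min_solution (X : NormedSpace) (Y : HilbertSpace)
    (DF : X -> Prop) (F : X -> Y) (Rf : X -> ereal) (y : Y) (xd : X) : Prop :=
  DF xd /\ F xd = y /\
  forall x, DF x -> F x = y -> ereal_le (Rf xd) (Rf x).

Definition assumption_A4 (X : NormedSpace) (Y : HilbertSpace)
    (DF : X -> Prop) (F : X -> Y) (F' : X -> X -> Y) (Rf : X -> ereal)
    (xd : X) (rho K : R) : Prop :=
  frechet_derivative X Y DF F F' /\
  (exists r, Rf xd = EFin r /\ r < rho) /\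
  0 <= K /\
  forall xb x xi, M_rho X DF Rf rho xb -> M_rho X DF Rf rho x -> subdiff X Rf x xi ->
    hs_norm Y (hs_sub Y (hs_sub Y (F xb) (F x)) (F' x (ns_sub X xb x)))
      <= K * sqrt (bregman X Rf xi xb x) * hs_norm Y (hs_sub Y (F xb) (F x)).

Definition interior_pt (X : NormedSpace) (D : X -> Prop) (x : X) : Prop :=
  exists del, del > 0 /\ forall z, ns_norm X (ns_sub X z x) < del -> D z.

Definition tikhonov (X : NormedSpace) (Y : HilbertSpace) (F : X -> Y) (Rf : X -> ereal)
    (alpha : R) (y : Y) (x : X) : ereal :=
  match Rf x with
  | EFin r => EFin (hs_norm Y (hs_sub Y (F x) y) ^ 2 + alpha * r)
  | EInf => EInf
  end.

Definition is_minimizer (X : NormedSpace) (Y : HilbertSpace) (DF : X -> Prop)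
    (F : X -> Y) (Rf : X -> ereal) (alpha : R) (y : Y) (x : X) : Prop :=
  DF x /\ forall z, DF z -> ereal_le (tikhonov X Y F Rf alpha y x) (tikhonov X Y F Rf alpha y z).

(* The subgradient is the first-order optimality condition of the noise-free Tikhonov
   functional at x_alpha: compare x_alpha with x_alpha + t (z - x_alpha), use convexity
   of R and the Fréchet expansion of F, and let t tend to 0.  For the estimate, comparing
   the noisy minimizer with x_alpha gives, with A := F(x_alpha^delta) - y^delta + y - F(x_alpha)
   and D the Bregman distance,
     |A|^2 + alpha D <= |y^delta - y|^2 + 2 <y - F(x_alpha), F(x_alpha^delta) - F(x_alpha)
                                           - F'(x_alpha)(x_alpha^delta - x_alpha)>;
   (A4) bounds the inner product by K |F(x_alpha) - y| sqrt D (|A| + |y^delta - y|), and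
   Young's inequality absorbs this into the left-hand side. *)

From Stdlib Require Import Reals Lra Psatz.
Open Scope R_scope.

Section HilbertSpaceFacts.

Variable Y : HilbertSpace.

Lemma hs_scal0 (u : Y) : hs_scal Y 0 u = hs_zero Y.
Proof.
  set (s := hs_scal Y 0 u).
  assert (Hdup : hs_add Y s s = s).
  { unfold s; rewrite <- hs_scal_distr_r; f_equal; ring. }
  rewrite <- (hs_add_opp Y s).
  rewrite <- Hdup at 2.
  rewrite <- hs_add_assoc, hs_add_opp, hs_add_zero; reflexivity.
Qed.

Lemma hs_opp_scal (u : Y) : hs_opp Y u = hs_scal Y (-1) u.
Proof.
  assert (Hinv : hs_add Y u (hs_scal Y (-1) u) = hs_zero Y).
  { rewrite <- (hs_scal_one Y u) at 1; rewrite <- hs_scal_distr_r.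
    replace (1 + -1) with 0 by ring; apply hs_scal0. }
  rewrite <- (hs_add_zero Y (hs_opp Y u)), <- Hinv, hs_add_assoc,
    (hs_add_comm Y (hs_opp Y u)), hs_add_opp, hs_add_comm, hs_add_zero.
  reflexivity.
Qed.

Lemma hs_add_subK (u v : Y) : hs_add Y u (hs_sub Y v u) = v.
Proof.
  unfold hs_sub; rewrite (hs_add_comm Y v), hs_add_assoc, hs_add_opp,
    hs_add_comm, hs_add_zero; reflexivity.
Qed.

Lemma hs_inner_add_r (u v w : Y) :
  hs_inner Y u (hs_add Y v w) = hs_inner Y u v + hs_inner Y u w.
Proof. rewrite !(hs_inner_sym Y u); apply hs_inner_add_l. Qed.

Lemma hs_inner_scal_r (a : R) (u v : Y) :
  hs_inner Y u (hs_scal Y a v) = a * hs_inner Y u v.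
Proof. rewrite !(hs_inner_sym Y u); apply hs_inner_scal_l. Qed.

Lemma hs_inner_opp_l (u v : Y) : hs_inner Y (hs_opp Y u) v = - hs_inner Y u v.
Proof. rewrite hs_opp_scal, hs_inner_scal_l; ring. Qed.

Lemma hs_inner_opp_r (u v : Y) : hs_inner Y u (hs_opp Y v) = - hs_inner Y u v.
Proof. rewrite hs_opp_scal, hs_inner_scal_r; ring. Qed.

Lemma hs_norm_ge0 (u : Y) : 0 <= hs_norm Y u.
Proof. apply sqrt_pos. Qed.

Lemma hs_norm_sq (u : Y) : hs_norm Y u ^ 2 = hs_inner Y u u.
Proof. apply pow2_sqrt, hs_inner_pos. Qed.

End HilbertSpaceFacts.

(* Expands inner products of sums, differences and multiples into inner
   products of atoms, each unordered pair of atoms written one way only. *)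
Ltac hs_inner_expand :=
  unfold hs_sub; rewrite ?hs_norm_sq;
  repeat rewrite ?hs_inner_add_l, ?hs_inner_add_r, ?hs_inner_opp_l,
    ?hs_inner_opp_r, ?hs_inner_scal_l, ?hs_inner_scal_r;
  repeat match goal with
  | |- context [hs_inner ?Y ?u ?v] =>
      match goal with
      | |- context [hs_inner Y v u] =>
          tryif constr_eq u v then fail else rewrite (hs_inner_sym Y v u)
      end
  end.

Section HilbertNorm.

Variable Y : HilbertSpace.

Lemma hs_norm_sub_sym (u v : Y) : hs_norm Y (hs_sub Y u v) = hs_norm Y (hs_sub Y v u).
Proof. unfold hs_norm; f_equal; hs_inner_expand; ring. Qed.

Lemma hs_inner_sq_le (u v : Y) :
  hs_inner Y u v ^ 2 <= hs_inner Y u u * hs_inner Y v v.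
Proof.
  pose proof (hs_inner_pos Y v) as Hvv.
  destruct (Req_dec (hs_inner Y v v) 0) as [Hv0 | Hv0].
  { assert (Hu0 : hs_inner Y u v = 0).
    { rewrite (hs_inner_eq0 Y v Hv0), <- (hs_scal0 Y (hs_zero Y)), hs_inner_scal_r; ring. }
    rewrite Hu0, Hv0; lra. }
  set (t := hs_inner Y u v / hs_inner Y v v).
  assert (Ht : t * hs_inner Y v v = hs_inner Y u v) by (unfold t; field; exact Hv0).
  pose proof (hs_inner_pos Y (hs_sub Y u (hs_scal Y t v))) as Hpos.
  revert Hpos; hs_inner_expand; nra.
Qed.

Lemma hs_cauchy_schwarz (u v : Y) :
  Rabs (hs_inner Y u v) <= hs_norm Y u * hs_norm Y v.
Proof.
  unfold hs_norm; rewrite <- sqrt_mult_alt, <- sqrt_Rsqr_abs by apply hs_inner_pos.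
  apply sqrt_le_1_alt; unfold Rsqr; pose proof (hs_inner_sq_le u v); lra.
Qed.

Lemma hs_inner_le (u v : Y) : hs_inner Y u v <= hs_norm Y u * hs_norm Y v.
Proof. eapply Rle_trans; [apply Rle_abs | apply hs_cauchy_schwarz]. Qed.

Lemma hs_inner_ge (u v : Y) : - (hs_norm Y u * hs_norm Y v) <= hs_inner Y u v.
Proof.
  pose proof (hs_cauchy_schwarz u v); pose proof (Rle_abs (- hs_inner Y u v)).
  rewrite Rabs_Ropp in *; lra.
Qed.

Lemma hs_norm_triangle (u v : Y) :
  hs_norm Y (hs_add Y u v) <= hs_norm Y u + hs_norm Y v.
Proof.
  pose proof (hs_norm_ge0 Y u); pose proof (hs_norm_ge0 Y v).
  pose proof (hs_norm_ge0 Y (hs_add Y u v)).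
  assert (Hsq : hs_norm Y (hs_add Y u v) ^ 2 <= (hs_norm Y u + hs_norm Y v) ^ 2).
  { pose proof (hs_inner_le u v); pose proof (hs_norm_sq Y u); pose proof (hs_norm_sq Y v).
    rewrite hs_norm_sq; hs_inner_expand; nra. }
  rewrite <- (sqrt_pow2 (hs_norm Y (hs_add Y u v))), <- (sqrt_pow2 (_ + _)) by lra.
  now apply sqrt_le_1_alt.
Qed.

Lemma hs_norm_scal (a : R) (u : Y) : hs_norm Y (hs_scal Y a u) = Rabs a * hs_norm Y u.
Proof.
  unfold hs_norm; rewrite hs_inner_scal_l, hs_inner_scal_r, <- Rmult_assoc.
  rewrite sqrt_mult_alt by apply Rle_0_sqr.
  change (a * a) with (Rsqr a); rewrite sqrt_Rsqr_abs; reflexivity.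
Qed.

End HilbertNorm.

Section NormedSpaceFacts.

Variable X : NormedSpace.

Lemma ns_scal0 (u : X) : ns_scal X 0 u = ns_zero X.
Proof.
  set (s := ns_scal X 0 u).
  assert (Hdup : ns_add X s s = s).
  { unfold s; rewrite <- ns_scal_distr_r; f_equal; ring. }
  rewrite <- (ns_add_opp X s).
  rewrite <- Hdup at 2.
  rewrite <- ns_add_assoc, ns_add_opp, ns_add_zero; reflexivity.
Qed.

Lemma ns_opp_scal (u : X) : ns_opp X u = ns_scal X (-1) u.
Proof.
  assert (Hinv : ns_add X u (ns_scal X (-1) u) = ns_zero X).
  { rewrite <- (ns_scal_one X u) at 1; rewrite <- ns_scal_distr_r.
    replace (1 + -1) with 0 by ring; apply ns_scal0. }
  rewrite <- (ns_add_zero X (ns_opp X u)), <- Hinv, ns_add_assoc,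
    (ns_add_comm X (ns_opp X u)), ns_add_opp, ns_add_comm, ns_add_zero.
  reflexivity.
Qed.

Lemma ns_norm_ge0 (u : X) : 0 <= ns_norm X u.
Proof.
  pose proof (ns_norm_triangle X u (ns_opp X u)) as Htri.
  rewrite ns_add_opp, <- (ns_scal0 u), ns_opp_scal, !ns_norm_scal, Rabs_R0,
    (Rabs_left (-1)) in Htri by lra.
  lra.
Qed.

Lemma ns_sub_addKl (x h : X) : ns_sub X (ns_add X x h) x = h.
Proof.
  unfold ns_sub; rewrite (ns_add_comm X x), <- ns_add_assoc, ns_add_opp, ns_add_zero.
  reflexivity.
Qed.

Lemma ns_convex_comb (t : R) (z x : X) :
  ns_add X (ns_scal X t z) (ns_scal X (1 - t) x) = ns_add X x (ns_scal X t (ns_sub X z x)).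
Proof.
  unfold ns_sub; rewrite ns_scal_distr_l, ns_opp_scal, ns_scal_assoc.
  replace (1 - t) with (1 + t * -1) by ring.
  rewrite ns_scal_distr_r, ns_scal_one, !ns_add_assoc, (ns_add_comm X (ns_scal X t z) x).
  reflexivity.
Qed.

End NormedSpaceFacts.

Lemma Rle_of_forall_le_plus_mul (a b C : R) :
  0 <= C -> (forall eta, 0 < eta -> a <= b + eta * C) -> a <= b.
Proof.
  intros HC Hle; apply Rle_plus_epsilon; intros eps Heps.
  pose proof (Hle (eps / (C + 1)) ltac:(apply Rdiv_lt_0_compat; lra)) as Hab.
  assert (eps / (C + 1) * C <= eps).
  { apply Rmult_le_reg_r with (C + 1); [lra|].
    replace (eps / (C + 1) * C * (C + 1)) with (eps * C) by (field; lra). nra. }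
  lra.
Qed.

(* Young's inequality [2 c s <= s^2 / 2 + 2 c^2], with [c = K nb sqrt D], absorbs the
   right-hand side into the left. *)
Lemma quadratic_bound_absorb (alpha K nb A dn D : R) :
  0 < alpha -> 0 <= K -> 0 <= nb -> 0 <= D ->
  A ^ 2 + alpha * D <= dn ^ 2 + 2 * (K * nb * sqrt D * (A + dn)) ->
  A ^ 2 + 2 * alpha * (1 - 4 * K ^ 2 * nb ^ 2 / alpha) * D <= 3 * dn ^ 2.
Proof.
  intros Halpha HK Hnb HD Hle.
  set (c := K * nb * sqrt D) in Hle.
  assert (Hc2 : c ^ 2 = K ^ 2 * nb ^ 2 * D)
    by (unfold c; rewrite !Rpow_mult_distr, pow2_sqrt; lra).
  replace (2 * alpha * (1 - 4 * K ^ 2 * nb ^ 2 / alpha) * D)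
    with (2 * alpha * D - 8 * c ^ 2) by (rewrite Hc2; field; lra).
  pose proof (pow2_ge_0 (A - 2 * c)); pose proof (pow2_ge_0 (dn - 2 * c)).
  nra.
Qed.

Lemma is_dual_adjoint (X : NormedSpace) (Y : HilbertSpace) (A : X -> Y) (w : Y) :
  is_bounded_linear X Y A -> is_dual X (adjoint X Y A w).
Proof.
  intros [Hadd [Hscal [M HM]]]; unfold adjoint; split; [|split].
  - intros u v; rewrite Hadd; apply hs_inner_add_r.
  - intros a u; rewrite Hscal; apply hs_inner_scal_r.
  - exists (hs_norm Y w * M); intro u.
    rewrite Rmult_assoc; eapply Rle_trans; [apply hs_cauchy_schwarz|].
    apply Rmult_le_compat_l; [apply hs_norm_ge0 | apply HM].
Qed.

Lemma is_dual_scal (X : NormedSpace) (f : X -> R) (c : R) :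
  is_dual X f -> is_dual X (fun u => c * f u).
Proof.
  intros [Hadd [Hscal [M HM]]]; split; [|split].
  - intros u v; rewrite Hadd; ring.
  - intros a u; rewrite Hscal; ring.
  - exists (Rabs c * M); intro u; rewrite Rabs_mult, Rmult_assoc.
    apply Rmult_le_compat_l; [apply Rabs_pos | apply HM].
Qed.

Lemma bregman_nonneg (X : NormedSpace) (Rf : X -> ereal) (xi : X -> R) (xb x : X) (rb : R) :
  subdiff X Rf x xi -> Rf xb = EFin rb -> 0 <= bregman X Rf xi xb x.
Proof.
  intros [_ [rx [Hrx Hsub]]] Hrb; specialize (Hsub xb).
  unfold bregman; rewrite Hrb, Hrx in *; simpl in *; lra.
Qed.

Lemma secant_quadratic_lower (Y : HilbertSpace) (b d v : Y) (t e : R) :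
  0 <= t -> 0 <= e -> hs_norm Y (hs_sub Y d (hs_scal Y t v)) <= e * t ->
  t * (2 * hs_inner Y b v - 2 * hs_norm Y b * e - t * (hs_norm Y v + e) ^ 2)
    <= 2 * hs_inner Y b d - hs_norm Y d ^ 2.
Proof.
  intros Ht He Hu; set (u := hs_sub Y d (hs_scal Y t v)) in Hu.
  assert (Hd : hs_add Y (hs_scal Y t v) u = d) by apply hs_add_subK.
  assert (Hinner : hs_inner Y b d = t * hs_inner Y b v + hs_inner Y b u)
    by (unfold u; hs_inner_expand; ring).
  assert (Hnd : hs_norm Y d <= t * (hs_norm Y v + e)).
  { rewrite <- Hd; eapply Rle_trans; [apply hs_norm_triangle|].
    rewrite hs_norm_scal, Rabs_pos_eq by exact Ht; lra. }
  pose proof (hs_inner_ge Y b u); pose proof (hs_norm_ge0 Y b).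
  pose proof (hs_norm_ge0 Y d); pose proof (hs_norm_ge0 Y v).
  assert (hs_norm Y b * hs_norm Y u <= hs_norm Y b * (e * t))
    by (apply Rmult_le_compat_l; assumption).
  assert (hs_norm Y d ^ 2 <= (t * (hs_norm Y v + e)) ^ 2) by (apply pow_incr; lra).
  nra.
Qed.

Section Tikhonov.

Variables (X : NormedSpace) (Y : HilbertSpace) (DF : X -> Prop) (F : X -> Y)
  (Rf : X -> ereal) (alpha : R).

Lemma tikhonov_minimizer_le (y : Y) (x z : X) (rx rz : R) :
  is_minimizer X Y DF F Rf alpha y x -> Rf x = EFin rx -> DF z -> Rf z = EFin rz ->
  hs_norm Y (hs_sub Y (F x) y) ^ 2 + alpha * rx <= hs_norm Y (hs_sub Y (F z) y) ^ 2 + alpha * rz.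
Proof.
  intros [_ Hmin] Hrx HDz Hrz; specialize (Hmin z HDz).
  unfold tikhonov in Hmin; rewrite Hrx, Hrz in Hmin; exact Hmin.
Qed.

Lemma tikhonov_secant_ineq (y : Y) (x z : X) (rx rz t : R) :
  convex_fun X Rf -> 0 <= alpha -> is_minimizer X Y DF F Rf alpha y x ->
  Rf x = EFin rx -> Rf z = EFin rz -> 0 <= t <= 1 ->
  DF (ns_add X x (ns_scal X t (ns_sub X z x))) ->
  2 * hs_inner Y (hs_sub Y y (F x)) (hs_sub Y (F (ns_add X x (ns_scal X t (ns_sub X z x)))) (F x))
    - hs_norm Y (hs_sub Y (F (ns_add X x (ns_scal X t (ns_sub X z x)))) (F x)) ^ 2
    <= alpha * t * (rz - rx).
Proof.
  intros Hconv Halpha Hxmin Hrx Hrz Ht HDp.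
  pose proof (Hconv z x rz rx t Hrz Hrx Ht) as Hcvx.
  rewrite ns_convex_comb in Hcvx.
  set (p := ns_add X x (ns_scal X t (ns_sub X z x))) in *.
  destruct (Rf p) as [rp|] eqn:Hrp; [simpl in Hcvx | contradiction].
  pose proof (tikhonov_minimizer_le y x p rx rp Hxmin Hrx HDp Hrp) as Hle.
  assert (alpha * rp <= alpha * (t * rz + (1 - t) * rx))
    by (apply Rmult_le_compat_l; assumption).
  revert Hle; hs_inner_expand; lra.
Qed.

End Tikhonov.

Lemma frechet_small_step (X : NormedSpace) (Y : HilbertSpace) (DF : X -> Prop)
    (F : X -> Y) (F' : X -> X -> Y) (x h : X) (eta tau : R) :
  frechet_derivative X Y DF F F' -> DF x -> interior_pt X DF x -> 0 < eta -> 0 < tau ->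
  exists t, 0 < t <= tau /\ DF (ns_add X x (ns_scal X t h)) /\
    hs_norm Y (hs_sub Y (hs_sub Y (F (ns_add X x (ns_scal X t h))) (F x))
                        (hs_scal Y t (F' x h)))
      <= eta * ns_norm X h * t.
Proof.
  intros Hfr HDx [di [Hdi Hball]] Heta Htau.
  destruct (Hfr x HDx) as [[_ [Hlin _]] Hrem].
  destruct (Hrem eta Heta) as [dF [HdF Hsmall]].
  pose proof (ns_norm_ge0 X h) as Hnh; set (nh := ns_norm X h) in *.
  set (del := Rmin di dF).
  assert (Hdel : 0 < del) by (apply Rmin_pos; lra).
  exists (Rmin tau (del / (nh + 1))).
  set (t := Rmin tau (del / (nh + 1))).
  assert (Ht : 0 < t) by (apply Rmin_pos; [lra | apply Rdiv_lt_0_compat; lra]).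
  assert (Hth : t * nh < del).
  { assert (t * (nh + 1) <= del).
    { apply Rle_trans with (del / (nh + 1) * (nh + 1));
        [apply Rmult_le_compat_r; [lra | apply Rmin_r] | right; field; lra]. }
    lra. }
  assert (Hnorm : ns_norm X (ns_scal X t h) = t * nh)
    by (rewrite ns_norm_scal, Rabs_pos_eq; [reflexivity | lra]).
  assert (HDp : DF (ns_add X x (ns_scal X t h))).
  { apply Hball; rewrite ns_sub_addKl, Hnorm.
    pose proof (Rmin_l di dF); unfold del in Hth; lra. }
  split; [split; [exact Ht | apply Rmin_l] | split; [exact HDp|]].
  rewrite <- Hlin.
  eapply Rle_trans; [apply (Hsmall _ HDp) |].
  - rewrite Hnorm; pose proof (Rmin_r di dF); unfold del in Hth; lra.
  - rewrite Hnorm; right; ring.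
Qed.

Section FirstOrderCondition.

Variables (X : NormedSpace) (Y : HilbertSpace) (DF : X -> Prop) (F : X -> Y)
  (F' : X -> X -> Y) (Rf : X -> ereal) (alpha : R) (y : Y) (x : X) (rx : R).

Hypotheses (Hfr : frechet_derivative X Y DF F F') (Hconv : convex_fun X Rf)
  (Hint : interior_pt X DF x) (Halpha : 0 < alpha)
  (Hxmin : is_minimizer X Y DF F Rf alpha y x) (Hrx : Rf x = EFin rx).

(* Divide the secant inequality by [t] and let [t] tend to [0]. *)
Lemma tikhonov_first_order_ineq (z : X) (rz : R) :
  Rf z = EFin rz ->
  2 * hs_inner Y (hs_sub Y y (F x)) (F' x (ns_sub X z x)) <= alpha * (rz - rx).
Proof.
  intro Hrz.
  set (h := ns_sub X z x); set (b := hs_sub Y y (F x)).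
  pose proof (hs_norm_ge0 Y b); pose proof (ns_norm_ge0 X h).
  pose proof (hs_norm_ge0 Y (F' x h)).
  set (nb := hs_norm Y b) in *; set (nh := ns_norm X h) in *.
  set (nA := hs_norm Y (F' x h)) in *.
  apply (Rle_of_forall_le_plus_mul _ _ (2 * nb * nh + 1)); [nra|].
  intros eta Heta.
  pose proof (pow2_ge_0 (nA + eta * nh)); set (Q := (nA + eta * nh) ^ 2) in *.
  assert (Htau : 0 < Rmin 1 (eta / (Q + 1)))
    by (apply Rmin_pos; [lra | apply Rdiv_lt_0_compat; lra]).
  destruct (frechet_small_step X Y DF F F' x h eta _ Hfr (proj1 Hxmin) Hint Heta Htau)
    as [t [[Ht Httau] [HDp Hrem]]].
  assert (HtQ : t * Q <= eta).
  { apply Rle_trans with (eta / (Q + 1) * (Q + 1)); [|right; field; lra].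
    pose proof (Rmin_r 1 (eta / (Q + 1))).
    apply Rmult_le_compat; lra. }
  pose proof (Rmin_l 1 (eta / (Q + 1))).
  pose proof (tikhonov_secant_ineq X Y DF F Rf alpha y x z rx rz t Hconv
    ltac:(lra) Hxmin Hrx Hrz ltac:(lra) HDp) as Hsec.
  pose proof (secant_quadratic_lower Y b _ (F' x h) t (eta * nh)
    ltac:(lra) ltac:(nra) Hrem) as Hlow.
  fold h b nb nA Q in Hsec, Hlow.
  assert (Hdiv : 2 * hs_inner Y b (F' x h) - 2 * nb * (eta * nh) - t * Q <= alpha * (rz - rx)).
  { apply Rmult_le_reg_l with t; [exact Ht | lra]. }
  lra.
Qed.

Lemma tikhonov_minimizer_subdiff :
  subdiff X Rf x (fun h => (2 / alpha) * adjoint X Y (F' x) (hs_sub Y y (F x)) h).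
Proof.
  split.
  - apply is_dual_scal, is_dual_adjoint, (Hfr x (proj1 Hxmin)).
  - exists rx; split; [exact Hrx|]; intro z.
    destruct (Rf z) as [rz|] eqn:Hrz; [simpl; unfold adjoint | exact I].
    pose proof (tikhonov_first_order_ineq z rz Hrz) as Hineq.
    apply Rmult_le_reg_l with alpha; [exact Halpha|].
    replace (alpha * (rx + 2 / alpha * hs_inner Y (hs_sub Y y (F x)) (F' x (ns_sub X z x))))
      with (alpha * rx + 2 * hs_inner Y (hs_sub Y y (F x)) (F' x (ns_sub X z x)))
      by (field; lra).
    lra.
Qed.

End FirstOrderCondition.

Lemma tikhonov_noise_bregman_ineq (X : NormedSpace) (Y : HilbertSpace) (DF : X -> Prop)
    (F : X -> Y) (F' : X -> X -> Y) (Rf : X -> ereal) (alpha : R) (y ydel : Y)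
    (xad xa : X) (rxad rxa : R) (xi : X -> R) :
  0 < alpha -> is_minimizer X Y DF F Rf alpha ydel xad -> DF xa ->
  Rf xad = EFin rxad -> Rf xa = EFin rxa ->
  (forall h, xi h = 2 / alpha * hs_inner Y (hs_sub Y y (F xa)) (F' xa h)) ->
  hs_norm Y (hs_add Y (hs_sub Y (F xad) ydel) (hs_sub Y y (F xa))) ^ 2
    + alpha * bregman X Rf xi xad xa
  <= hs_norm Y (hs_sub Y ydel y) ^ 2
    + 2 * hs_inner Y (hs_sub Y y (F xa))
            (hs_sub Y (hs_sub Y (F xad) (F xa)) (F' xa (ns_sub X xad xa))).
Proof.
  intros Halpha Hmin HDxa Hrxad Hrxa Hxi.
  pose proof (tikhonov_minimizer_le X Y DF F Rf alpha ydel xad xa rxad rxa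
    Hmin Hrxad HDxa Hrxa) as Hle.
  unfold bregman; rewrite Hrxad, Hrxa, Hxi; simpl fin.
  replace (alpha * (rxad - rxa - 2 / alpha *
             hs_inner Y (hs_sub Y y (F xa)) (F' xa (ns_sub X xad xa))))
    with (alpha * rxad - alpha * rxa
          - 2 * hs_inner Y (hs_sub Y y (F xa)) (F' xa (ns_sub X xad xa)))
    by (field; lra).
  revert Hle; hs_inner_expand; lra.
Qed.

Theorem lemma3p5
  (X : NormedSpace) (Y : HilbertSpace)
  (HXc : ns_complete X) (HXr : reflexive X) (HYc : hs_complete Y)
  (DF : X -> Prop) (F : X -> Y) (F' : X -> X -> Y) (Rf : X -> ereal) (y : Y) (xd : X)
  (HFw : weakly_closed X Y DF F)
  (HRp : proper_fun X Rf) (HRn : nonneg_fun X Rf)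
  (HRl : lsc_fun X Rf) (HRc : convex_fun X Rf)
  (Hsol : exists x r, DF x /\ F x = y /\ Rf x = EFin r)
  (Hxd : R_min_solution X Y DF F Rf y xd)
  (rho K : R)
  (HA4 : assumption_A4 X Y DF F F' Rf xd rho K)
  (Hint : forall x, M_rho X DF Rf rho x -> interior_pt X DF x)
  (ydel : Y) (alpha : R) (Halpha : alpha > 0)
  (xad xa : X)
  (Hxad : is_minimizer X Y DF F Rf alpha ydel xad)
  (Hxa : is_minimizer X Y DF F Rf alpha y xa)
  (Hxad_M : M_rho X DF Rf rho xad) (Hxa_M : M_rho X DF Rf rho xa) :
  let xia : X -> R :=
    fun h => (2 / alpha) * adjoint X Y (F' xa) (hs_sub Y y (F xa)) h in
  subdiff X Rf xa xia /\
  hs_norm Y (hs_add Y (hs_sub Y (F xad) ydel) (hs_sub Y y (F xa))) ^ 2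
    + 2 * alpha * (1 - 4 * K ^ 2 * hs_norm Y (hs_sub Y (F xa) y) ^ 2 / alpha)
        * bregman X Rf xia xad xa
    <= 3 * hs_norm Y (hs_sub Y ydel y) ^ 2.
Proof.
  intro xia.
  destruct HA4 as [Hfr [_ [HK Hnonlin]]].
  pose proof Hxa_M as [HDxa [rxa [Hrxa _]]].
  pose proof Hxad_M as [_ [rxad [Hrxad _]]].
  pose proof (tikhonov_minimizer_subdiff X Y DF F F' Rf alpha y xa rxa Hfr HRc
    (Hint xa Hxa_M) Halpha Hxa Hrxa) as Hsub.
  split; [exact Hsub|].
  pose proof (tikhonov_noise_bregman_ineq X Y DF F F' Rf alpha y ydel xad xa rxad rxa xia
    Halpha Hxad HDxa Hrxad Hrxa (fun h => eq_refl)) as Hest.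
  pose proof (Hnonlin xad xa xia Hxad_M Hxa_M Hsub) as Hw.
  set (b := hs_sub Y y (F xa)) in *.
  set (w := hs_sub Y (hs_sub Y (F xad) (F xa)) (F' xa (ns_sub X xad xa))) in *.
  set (A := hs_add Y (hs_sub Y (F xad) ydel) b) in *.
  set (e := hs_sub Y ydel y) in *.
  assert (Hdiff : hs_norm Y (hs_sub Y (F xad) (F xa)) <= hs_norm Y A + hs_norm Y e).
  { replace (hs_norm Y (hs_sub Y (F xad) (F xa))) with (hs_norm Y (hs_add Y A e))
      by (unfold hs_norm; f_equal; unfold A, b, e; hs_inner_expand; ring).
    apply hs_norm_triangle. }
  pose proof (hs_inner_le Y b w).
  rewrite hs_norm_sub_sym; fold b.
  apply quadratic_bound_absorb; [lra | exact HK | apply hs_norm_ge0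
    | exact (bregman_nonneg X Rf xia xad xa rxad Hsub Hrxad) |].
  pose proof (hs_norm_ge0 Y b); pose proof (sqrt_pos (bregman X Rf xia xad xa)).
  assert (hs_norm Y w <= K * sqrt (bregman X Rf xia xad xa) * (hs_norm Y A + hs_norm Y e))
    by (eapply Rle_trans; [exact Hw | apply Rmult_le_compat_l; [nra | exact Hdiff]]).
  nra.
Qed.
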